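(* Consider problem (P) under Assumptions (A1)–(A3) and run the SMIL algorithm with tolerance $\varepsilon\ge 0$. Then at every iteration $k$ at which the algorithm has not terminated, the backtracking loop (step S4) is executed only finitely many times: after finitely many reductions $\Delta_k\leftarrow\kappa\Delta_k$, either the algorithm terminates at step S3 or the sufficient decrease condition $a_k\ge\varrho\Psi_k$ holds, so that the trial point $x^{k+1}$ is accepted.
   Context: Problem (P): minimize $f(x)$ subject to $x\in\mathcal{X}:=\bar{\mathcal{X}}\cap\{x\in\mathbb{R}^n : x_i\in\mathbb{Z}\ \forall i\in\mathcal{I}\}$, with $\bar{\mathcal{X}}\subseteq\mathbb{R}^n$ a closed convex polyhedral set, $\mathcal{I}\subseteq\{1,\dots,n\}$, $\mathcal{X}\ne\emptyset$, $f:\mathbb{R}^n\to\mathbb{R}$. Write $x=(u,z)$ with $u$ the components with indices not in $\mathcal{I}$ and $z$ those in $\mathcal{I}$. Assumptions: (A1) $f$ is $C^1$ with locally Lipschitz gradient; (A2) $f(u,z)=f_1(u)+\langle f_2,z\rangle$; (A3) the feasible integer parts $\{z:(u,z)\in\mathcal{X}\}$ form a bounded set. $\|x\|_{PL}$ is the $\ell_1$- or $\ell_\infty$-norm of the components with indices not in $\mathcal{I}$; $\mathbb{B}_{PL}(x,\Delta):=\{w:\|w-x\|_{PL}\le\Delta\}$. SMIL algorithm. Input $x^0\in\mathcal{X}$, $\varepsilon\ge0$; parameters $\Delta_0>0$, $\varrho,\kappa\in(0,1)$, $\kappa_m\in(0,1]$. Set $m_0:=f(x^0)$. For $k=0,1,2,\dots$: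 (S1) compute $x^{k+1}\in\arg\min\{\langle\nabla f(x^k),x\rangle : x\in\mathcal{X}\cap\mathbb{B}_{PL}(x^k,\Delta_k)\}$; (S2) set $a_k:=m_k-f(x^{k+1})$ and $\Psi_k:=\langle\nabla f(x^k),x^k-x^{k+1}\rangle$; (S3) if $\Psi_k\le\varepsilon$, return $x^k$; (S4) if $a_k<\varrho\Psi_k$, set $\Delta_k\leftarrow\kappa\Delta_k$ and go back to (S1) (backtracking); (S5) set $m_{k+1}:=(1-\kappa_m)m_k+\kappa_m f(x^{k+1})$; (S6) choose $\Delta_{k+1}$ either by the rule $\Delta_{k+1}=\kappa\Delta_k$ if $\rho_k<\varrho_1$, $\Delta_{k+1}=\Delta_k$ if $\varrho_1\le\rho_k<\varrho_2$, $\Delta_{k+1}=\Delta_k/\kappa$ if $\rho_k\ge\varrho_2$, where $\rho_k:=a_k/\Psi_k$ and $\varrho\le\varrho_1<\varrho_2<1$; or by a reset $\Delta_{k+1}\in[\Delta_{\min},\Delta_{\max}]$ with $0<\Delta_{\min}\le\Delta_{\max}$. *)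

From HB Require Import structures.
From mathcomp Require Import all_boot all_order all_algebra.
From mathcomp Require Import all_classical all_reals all_analysis.
Set Implicit Arguments. Unset Strict Implicit. Unset Printing Implicit Defensive.
Import Order.TTheory GRing.Theory Num.Theory.
Import numFieldNormedType.Exports.
Local Open Scope ring_scope.

Section SMIL.
Variables (R : realType) (n p : nat).
Variables (A : 'M[R]_(p, n)) (b : 'cV[R]_p).
Variable (I : {set 'I_n}).
(* l1 = true : ||.||_PL is the l1-norm of the continuous part; false : l_inf *)
Variable (l1 : bool).

Definition dotv (u v : 'rV[R]_n) : R := \sum_(i < n) u 0 i * v 0 i.

Definition inXbar (x : 'rV[R]_n) : Prop :=
  forall i : 'I_p, \sum_(j < n) A i j * x 0 j <= b i 0.

Definition inX (x : 'rV[R]_n) : Prop :=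
  inXbar x /\ (forall i, i \in I -> x 0 i \is a Num.int).

Definition normPL (x : 'rV[R]_n) : R :=
  if l1 then \sum_(i < n | i \notin I) `|x 0 i|
  else \big[Num.max/0]_(i < n | i \notin I) `|x 0 i|.

(* x = (u, z): the continuous part u, with the integer components zeroed *)
Definition upart (x : 'rV[R]_n) : 'rV[R]_n :=
  \row_(i < n) (if i \in I then 0 else x 0 i).

Variables (f : 'rV[R]_n -> R) (g : 'rV[R]_n -> 'rV[R]_n).
(* g plays the role of the gradient of f (see hypotheses of mainTheorem4) *)

Definition subfeas (x : 'rV[R]_n) (D : R) (y : 'rV[R]_n) : Prop :=
  inX y /\ normPL (y - x) <= D.

Definition is_subsol (x : 'rV[R]_n) (D : R) (y : 'rV[R]_n) : Prop :=
  subfeas x D y /\ forall w, subfeas x D w -> dotv (g x) y <= dotv (g x) w.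

Definition Psi (x y : 'rV[R]_n) : R := dotv (g x) (x - y).

Variables (x0 : 'rV[R]_n) (eps Delta0 rho kappa kappam rho1 rho2 Dmin Dmax : R).

(* step S6: admissible choices of Delta_{k+1} from Delta_k (after backtracking),
   a_k and Psi_k *)
Definition delta_update (Dk ak Psik Dn : R) : Prop :=
  let rk := ak / Psik in
  (rk < rho1 /\ Dn = kappa * Dk)
  \/ (rho1 <= rk < rho2 /\ Dn = Dk)
  \/ (rho2 <= rk /\ Dn = Dk / kappa)
  \/ (Dmin <= Dn <= Dmax).

(* reachable x m D : (x^k, m_k, Delta_k) is the state at the start of some
   iteration k of a run of SMIL that has not terminated before iteration k. *)
Inductive smil_reachable : 'rV[R]_n -> R -> R -> Prop :=
| smil_init : smil_reachable x0 (f x0) Delta0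
| smil_step (x : 'rV[R]_n) (m D : R) (j : nat) (y : 'rV[R]_n) (Dn : R) :
    smil_reachable x m D ->
    (* j backtracking steps (S4) were performed, each with a rejected trial *)
    (forall i : nat, (i < j)%N -> exists y', is_subsol x (kappa ^+ i * D) y'
        /\ eps < Psi x y' /\ m - f y' < rho * Psi x y') ->
    is_subsol x (kappa ^+ j * D) y ->
    eps < Psi x y ->
    rho * Psi x y <= m - f y ->
    delta_update (kappa ^+ j * D) (m - f y) (Psi x y) Dn ->
    smil_reachable y ((1 - kappam) * m + kappam * f y) Dn.

End SMIL.

From HB Require Import structures.
From mathcomp Require Import all_boot all_order all_algebra.
From mathcomp Require Import all_classical all_reals all_analysis.
From mathcomp Require Import ring lra zify.
Import Order.TTheory GRing.Theory Num.Theory.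
Import numFieldNormedType.Exports.
Local Open Scope ring_scope.
Set Implicit Arguments. Unset Strict Implicit. Unset Printing Implicit Defensive.

(* Suppose every trial point of an iteration is rejected.  The integer parts
   of the trial points range over a finite set by (A3), so one of them, z,
   recurs infinitely often, while the continuous parts converge to those of
   x^k.  Hence the graft w = (u^k, z) lies in X, as X-bar is closed, and has
   <grad f(x^k), x^k - w> >= 0.  Shrinking the segment from w to a trial
   point with integer part z by kappa^(j - k1) keeps it in the j-th trust
   region, so Psi decays at most geometrically: Psi_j >= kappa^(j-k1) Psi_k1.
   By (A2) the model error f(x^{k+1}) - f(x^k) + Psi_j only sees the
   continuous step, of norm <= kappa^j Delta_k, so it is o(kappa^j); yet
   rejection together with f(x^k) <= m_k forces it above (1 - rho) Psi_j. *)

Section InnerProduct.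
Variables (R : realType) (n : nat).
Implicit Types (u v w : 'rV[R]_n).

Lemma dotvD u v w : dotv u (v + w) = dotv u v + dotv u w.
Proof. by rewrite /dotv -big_split; apply: eq_bigr => i _; rewrite mxE mulrDr. Qed.

Lemma dotvZ u v a : dotv u (a *: v) = a * dotv u v.
Proof. by rewrite /dotv mulr_sumr; apply: eq_bigr => i _; rewrite mxE mulrCA. Qed.

Lemma dotvB u v w : dotv u (v - w) = dotv u v - dotv u w.
Proof. by rewrite /dotv -sumrB; apply: eq_bigr => i _; rewrite !mxE mulrBr. Qed.

Lemma dotv_delta u i : dotv u (delta_mx 0 i) = u 0 i.
Proof.
rewrite /dotv (bigD1 i) //= big1 ?addr0; first by rewrite mxE !eqxx mulr1.
by move=> j ji; rewrite mxE (negbTE ji) andbF mulr0.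
Qed.

Lemma ler_norm_dotv u v c :
  (forall i, `|v 0 i| <= c) -> `|dotv u v| <= (\sum_i `|u 0 i|) * c.
Proof.
move=> vc; rewrite /dotv mulr_suml; apply: le_trans (ler_norm_sum _ _ _) _.
by apply: ler_sum => i _; rewrite normrM ler_wpM2l.
Qed.

Lemma mx_norm_le_entries v c : 0 <= c -> (forall i, `|v 0 i| <= c) -> `|v| <= c.
Proof.
move=> c0 vc; rewrite [`|v|]mx_normrE; apply: bigmax_le => // -[i j] _ /=.
by rewrite (ord1 i).
Qed.

End InnerProduct.

Lemma dotv_row (R : realType) (n p : nat) (A : 'M[R]_(p, n)) q (x : 'rV[R]_n) :
  \sum_(j < n) A q j * x 0 j = dotv (row q A) x.
Proof. by apply: eq_bigr => j _; rewrite mxE. Qed.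

Section NormPL.
Variables (R : realType) (n : nat) (I : {set 'I_n}) (l1 : bool).
Implicit Types (v w : 'rV[R]_n).

Lemma normPL_ge0 v : 0 <= normPL I l1 v.
Proof.
rewrite /normPL; case: l1; first exact: sumr_ge0.
by elim/big_ind: _ => //= a c a0 _; rewrite le_max a0.
Qed.

Lemma ler_entry_normPL v i : i \notin I -> `|v 0 i| <= normPL I l1 v.
Proof.
move=> iI; rewrite /normPL; case: l1; rewrite (bigD1 i) //=.
  by rewrite lerDl sumr_ge0.
by rewrite le_max lexx orTb.
Qed.

Lemma normPL_le_scale v w t : 0 <= t ->
  (forall i, i \notin I -> `|v 0 i| <= t * `|w 0 i|) ->
  normPL I l1 v <= t * normPL I l1 w.
Proof.
move=> t0 vw; have w0 := normPL_ge0 w; have wi := ler_entry_normPL w.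
rewrite /normPL in w0 wi *; case: l1 w0 wi => w0 wi.
  by rewrite mulr_sumr; apply: ler_sum.
apply: bigmax_le => [|i iI]; first exact: mulr_ge0.
by apply: le_trans (vw i iI) _; rewrite ler_wpM2l ?wi.
Qed.

End NormPL.

Definition infinitely_often (P : nat -> Prop) := forall N, exists2 k, (N <= k)%N & P k.

Lemma infinitely_often_value (T : finType) (s : nat -> T) :
  exists t, infinitely_often (fun k => s k = t).
Proof.
apply: contrapT => /forallNP never.
have /choice[last_hit hit] : forall t, exists N, forall k, (N <= k)%N -> s k <> t.
  move=> t; have /existsNP[N /forall2NP Nt] := never t.
  by exists N => k Nk skt; case: (Nt k) => -[].
pose N := (\max_t last_hit t)%N.
exact: (hit (s N) N (leq_bigmax _)).
Qed.

Lemma exists_expr_lt (R : realType) (k e : R) : 0 <= k < 1 -> 0 < e ->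
  exists N : nat, k ^+ N < e.
Proof.
move=> /andP[k0 k1] e0.
have k1' : `|k| < 1 by rewrite ger0_norm.
have /cvgrPdist_lt/(_ e e0)[N _ HN] := @cvg_expr R k k1'.
by exists N; have := HN N (leqnn N); rewrite /= sub0r normrN ger0_norm ?exprn_ge0.
Qed.

Lemma le0_infinitely_often_expr (R : realType) (kappa c a : R) (P : nat -> Prop) :
  0 <= kappa < 1 -> 0 <= c -> infinitely_often P ->
  (forall k, P k -> a <= c * kappa ^+ k) -> a <= 0.
Proof.
move=> k01 c0 Pio aP; rewrite leNgt; apply/negP => a0.
have c1 : 0 < c + 1 by lra.
have [N] := exists_expr_lt k01 (divr_gt0 a0 c1); rewrite ltr_pdivlMr // => kN.
have [k Nk /aP ak] := Pio N; case/andP: k01 => k0 k1.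
have kk : kappa ^+ k <= kappa ^+ N by rewrite ler_wiXn2l // ltW.
have := exprn_ge0 k k0; nra.
Qed.

Lemma dotv_le_infinitely_often (R : realType) (n : nat) (u w : 'rV[R]_n)
    (y : nat -> 'rV[R]_n) (kappa D c : R) (P : nat -> Prop) :
  0 <= kappa < 1 -> 0 <= D -> infinitely_often P ->
  (forall k, P k -> forall i, `|w 0 i - y k 0 i| <= kappa ^+ k * D) ->
  (forall k, P k -> dotv u (y k) <= c) -> dotv u w <= c.
Proof.
move=> k01 D0 Pio wy uy; rewrite -subr_le0.
apply: (le0_infinitely_often_expr (c := (\sum_i `|u 0 i|) * D) k01 _ Pio).
  by rewrite mulr_ge0 ?sumr_ge0.
move=> k Pk; have wyk i : `|(w - y k) 0 i| <= kappa ^+ k * D by rewrite !mxE wy.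
rewrite -mulrA [D * _]mulrC; apply: le_trans (ler_norm_dotv u wyk).
have := uy k Pk; have := ler_norm (dotv u (w - y k)); rewrite dotvB; lra.
Qed.

Definition int_code (R : realType) (n K : nat) (y : 'rV[R]_n) :
    {ffun 'I_n -> 'I_(K + K).+1} :=
  [ffun i => inord (absz (Num.floor (y 0 i) + K%:Z))].

Lemma int_code_inj (R : realType) (n K : nat) (I : {set 'I_n}) (y y' : 'rV[R]_n) :
  {in I, forall i, y 0 i \is a Num.int /\ `|y 0 i| <= K%:R} ->
  {in I, forall i, y' 0 i \is a Num.int /\ `|y' 0 i| <= K%:R} ->
  int_code K y = int_code K y' -> {in I, forall i, y 0 i = y' 0 i}.
Proof.
move=> yI y'I /ffunP/(_ _)/(congr1 val) ycode i iI.
have floor_bnd (r : R) : `|r| <= K%:R -> (- K%:Z <= Num.floor r <= K%:Z)%R.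
  rewrite ler_norml => /andP[lo hi]; apply/andP; split.
    by rewrite floor_ge_int rmorphN.
  by rewrite -(ler_int R); apply: le_trans (floor_le _) hi.
have [yi /floor_bnd bi] := yI i iI; have [y'i /floor_bnd b'i] := y'I i iI.
have := ycode i; rewrite !ffunE /= !inordK; try lia.
by move=> fl; rewrite -(floorK yi) -(floorK y'i); congr (_%:~R); lia.
Qed.

Lemma int_part_infinitely_often (R : realType) (n : nat) (I : {set 'I_n})
    (y : nat -> 'rV[R]_n) (M : R) :
  (forall k, {in I, forall i, y k 0 i \is a Num.int /\ `|y k 0 i| <= M}) ->
  exists k1, infinitely_often (fun k => {in I, forall i, y k 0 i = y k1 0 i}).
Proof.
move=> yI; pose K := (Num.truncn M).+1.
have MK : M <= K%:R by rewrite ltW // truncnS_gt.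
have yK k : {in I, forall i, y k 0 i \is a Num.int /\ `|y k 0 i| <= K%:R}.
  by move=> i iI; have [yi yM] := yI k i iI; split; last exact: le_trans MK.
have [t tio] := infinitely_often_value (fun k => int_code K (y k)).
have [k1 _ k1t] := tio 0%N.
exists k1 => N; have [k Nk kt] := tio N; exists k => //.
by apply: int_code_inj (yK k) (yK k1) _; rewrite kt k1t.
Qed.

Lemma differentiable_rem_le (R : realType) (n : nat) (f : 'rV[R]_n -> R) x :
  differentiable f x -> forall e : R, 0 < e -> exists2 d : R, 0 < d &
    forall h, `|h| < d -> `|f (h + x) - f x - 'd f x h| <= e * `|h|.
Proof.
move=> fx e e0; have /eqaddoP/(_ e e0)/nbhs_ballP[d d0 small] := diff_locally fx.
exists d => // h hd; have : ball (0 : 'rV[R]_n) d h.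
  by rewrite -ball_normE /ball_ /= sub0r normrN.
by move=> /small /=; rewrite !fctE opprD addrA.
Qed.

Section LinearInIntegerPart.
Variables (R : realType) (n : nat) (I : {set 'I_n}).
Variables (f f1 : 'rV[R]_n -> R) (g : 'rV[R]_n -> 'rV[R]_n) (f2 : 'rV[R]_n).
Hypothesis f_split :
  forall x, f x = f1 (upart I x) + \sum_(i < n | i \in I) f2 0 i * x 0 i.

Lemma grad_int_coord x : differentiable f x ->
  (forall h, 'd f x h = dotv (g x) h) -> {in I, forall i, g x 0 i = f2 0 i}.
Proof.
move=> fx dfx i iI.
have f_line t : f (t *: delta_mx 0 i + x) - f x = t * f2 0 i.
  rewrite !f_split.
  have -> : upart I (t *: delta_mx 0 i + x) = upart I x.
    apply/rowP => j; rewrite !mxE; case: ifP => // jI.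
    have /negbTE-> : j != i by apply: contraFN jI => /eqP->.
    by rewrite andbF mulr0 add0r.
  rewrite (bigD1 i) //= [X in _ - (_ + X)](bigD1 i) //= !mxE !eqxx /= mulr1.
  rewrite (eq_bigr (fun j => f2 0 j * x 0 j)); first by ring.
  by move=> j /andP[_ ji]; rewrite !mxE (negbTE ji) andbF mulr0 add0r.
apply/eqP; rewrite -subr_eq0 -normr_le0; apply/ler_addgt0Pr => e e0.
have [d d0 small] := differentiable_rem_le fx e0.
pose t := d / 2; have t0 : 0 < t by rewrite divr_gt0.
have tn : `|t *: (delta_mx 0 i : 'rV[R]_n)| <= t.
  apply: mx_norm_le_entries (ltW t0) _ => j; rewrite !mxE normrM ger0_norm ?(ltW t0) //.
  by case: (_ && _); rewrite ?normr1 ?normr0 ?mulr1 ?mulr0 // ltW.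
have td : t < d by rewrite /t; lra.
have := small _ (le_lt_trans tn td); rewrite f_line dfx dotvZ dotv_delta.
rewrite -mulrBr normrM ger0_norm ?(ltW t0) // => near.
rewrite add0r distrC -(ler_pM2l t0) [t * e]mulrC; apply: le_trans near _.
by rewrite ler_wpM2l // ltW.
Qed.

Lemma model_error x y : {in I, forall i, g x 0 i = f2 0 i} ->
  f y - f x + Psi g x y =
  f (upart I (y - x) + x) - f x - dotv (g x) (upart I (y - x)).
Proof.
move=> gI; set h := upart I (y - x).
have int_part : f (h + x) - f y = \sum_(i < n | i \in I) g x 0 i * (x 0 i - y 0 i).
  rewrite !f_split (_ : upart I (h + x) = upart I y); last first.
    by apply/rowP => i; rewrite /h !mxE; case: ifP => // iI; rewrite iI subrK.
  under eq_bigr => i iI do rewrite /h !mxE iI add0r.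
  rewrite opprD addrACA subrr add0r -sumrB; apply: eq_bigr => i iI.
  by rewrite gI // mulrBr.
have Psi_split : Psi g x y = \sum_(i < n | i \in I) g x 0 i * (x 0 i - y 0 i)
                           + \sum_(i < n | i \notin I) g x 0 i * (x 0 i - y 0 i).
  rewrite /Psi /dotv (bigID (fun i => i \in I)) /=.
  by congr (_ + _); apply: eq_bigr => i _; rewrite !mxE.
have cont_part : dotv (g x) h = - \sum_(i < n | i \notin I) g x 0 i * (x 0 i - y 0 i).
  rewrite /dotv /h (bigID (fun i => i \in I)) /= big1 ?add0r; last first.
    by move=> i iI; rewrite mxE iI mulr0.
  rewrite -sumrN; apply: eq_bigr => i iI; rewrite !mxE (negbTE iI).
  by rewrite -mulrN opprB.
rewrite Psi_split cont_part -int_part; lra.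
Qed.

End LinearInIntegerPart.

Lemma smil_reachable_f_le (R : realType) (n p : nat) (A : 'M[R]_(p, n))
    (b : 'cV[R]_p) (I : {set 'I_n}) (l1 : bool) (f : 'rV[R]_n -> R)
    (g : 'rV[R]_n -> 'rV[R]_n) (x0 : 'rV[R]_n)
    (eps Delta0 rho kappa kappam rho1 rho2 Dmin Dmax : R) :
  0 <= eps -> 0 < rho -> kappam <= 1 -> forall x m D,
  smil_reachable A b I l1 f g x0 eps Delta0 rho kappa kappam rho1 rho2 Dmin Dmax
    x m D -> f x <= m.
Proof.
move=> eps0 rho0 km1 x m D.
elim=> [|{}x {}m {}D j y Dn _ fxm _ _ Psi_gt decrease _] //.
have : 0 < rho * Psi g x y by rewrite mulr_gt0 // (le_lt_trans eps0).
nra.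
Qed.

Definition graft (R : realType) (n : nat) (I : {set 'I_n}) (z x : 'rV[R]_n) :
  'rV[R]_n := \row_i (if i \in I then z 0 i else x 0 i).

Lemma Psi_affine (R : realType) (n : nat) (g : 'rV[R]_n -> 'rV[R]_n) x w y t :
  Psi g x ((1 - t) *: w + t *: y) = (1 - t) * Psi g x w + t * Psi g x y.
Proof.
rewrite /Psi /dotv !mulr_sumr -big_split /=; apply: eq_bigr => i _; rewrite !mxE; ring.
Qed.

Lemma subfeas_segment (R : realType) (n p : nat) (A : 'M[R]_(p, n))
    (b : 'cV[R]_p) (I : {set 'I_n}) (l1 : bool) (x w y : 'rV[R]_n) (D t : R) :
  0 <= t <= 1 -> inX A b I w -> subfeas A b I l1 x D y ->
  {in I, forall i, w 0 i = y 0 i} -> (forall i, i \notin I -> w 0 i = x 0 i) ->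
  subfeas A b I l1 x (t * D) ((1 - t) *: w + t *: y).
Proof.
move=> /andP[t0 t1] [wXbar _] [[yXbar yint] yD] wy wx; split; first split.
- move=> q; have := wXbar q; have := yXbar q.
  rewrite !dotv_row dotvD !dotvZ; nra.
- by move=> i iI; rewrite !mxE wy // -mulrDl subrK mul1r yint.
apply: le_trans (ler_wpM2l t0 yD); apply: normPL_le_scale => // i iI.
rewrite !mxE wx // (_ : _ - _ = t * (y 0 i - x 0 i)); last by ring.
by rewrite normrM ger0_norm.
Qed.

Section Backtracking.
Variables (R : realType) (n p : nat) (A : 'M[R]_(p, n)) (b : 'cV[R]_p).
Variables (I : {set 'I_n}) (l1 : bool) (g : 'rV[R]_n -> 'rV[R]_n).
Variables (x : 'rV[R]_n) (kappa D : R) (sel : nat -> 'rV[R]_n).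
Hypothesis kappa01 : 0 < kappa < 1.
Hypothesis sel_subsol : forall j, is_subsol A b I l1 g x (kappa ^+ j * D) (sel j).

Let kappa_ge0_lt1 : 0 <= kappa < 1.
Proof. by case/andP: kappa01 => k0 ->; rewrite ltW. Qed.

Lemma radius_ge0 : 0 <= D.
Proof.
have [[_ selD] _] := sel_subsol 0; rewrite expr0 mul1r in selD.
exact: le_trans (normPL_ge0 _ _ _) selD.
Qed.

Let radius_pow_ge0 k : 0 <= kappa ^+ k * D.
Proof. by case/andP: kappa_ge0_lt1 => k0 _; rewrite mulr_ge0 ?exprn_ge0 ?radius_ge0. Qed.

Lemma sel_cont_near j i : i \notin I -> `|sel j 0 i - x 0 i| <= kappa ^+ j * D.
Proof.
move=> iI; have [[_ selD] _] := sel_subsol j; apply: le_trans selD.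
by have := ler_entry_normPL l1 (sel j - x) iI; rewrite !mxE.
Qed.

Lemma norm_upart_sel j : `|upart I (sel j - x)| <= kappa ^+ j * D.
Proof.
apply: mx_norm_le_entries => // i; rewrite !mxE.
by case: ifPn => iI; [rewrite normr0 | exact: sel_cont_near].
Qed.

Section SameIntegerPart.
Variable k1 : nat.
Hypothesis same_int :
  infinitely_often (fun k => {in I, forall i, sel k 0 i = sel k1 0 i}).
Local Notation w := (graft I (sel k1) x).

Lemma graft_near k : {in I, forall i, sel k 0 i = sel k1 0 i} ->
  forall i, `|w 0 i - sel k 0 i| <= kappa ^+ k * D.
Proof.
move=> same i; rewrite mxE; case: ifPn => iI.
  by rewrite same // subrr normr0.
by rewrite distrC sel_cont_near.
Qed.

Lemma graft_feasible : inX A b I w.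
Proof.
split=> [q|i iI]; last first.
  by have [[[_ int] _] _] := sel_subsol k1; rewrite mxE iI int.
rewrite dotv_row.
apply: (dotv_le_infinitely_often kappa_ge0_lt1 radius_ge0 same_int graft_near).
by move=> k _; have [[[selXbar _] _] _] := sel_subsol k; rewrite -dotv_row selXbar.
Qed.

Lemma graft_Psi_ge0 : (forall k, 0 < Psi g x (sel k)) -> 0 <= Psi g x w.
Proof.
move=> Psi_gt0; rewrite /Psi dotvB subr_ge0.
apply: (dotv_le_infinitely_often kappa_ge0_lt1 radius_ge0 same_int graft_near).
by move=> k _; have := Psi_gt0 k; rewrite /Psi dotvB subr_gt0 => /ltW.
Qed.

Lemma Psi_ge_geometric : 0 <= Psi g x w ->
  forall k, (k1 <= k)%N -> kappa ^+ (k - k1) * Psi g x (sel k1) <= Psi g x (sel k).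
Proof.
move=> w0 k k1k; set t := kappa ^+ (k - k1).
have t01 : 0 <= t <= 1.
  case/andP: kappa_ge0_lt1 => k0 k1'.
  by rewrite /t exprn_ge0 //= exprn_ile1 // ltW.
have := subfeas_segment t01 graft_feasible (sel_subsol k1).1.
rewrite mulrA -exprD subnK // => seg.
have /(sel_subsol k).2 opt : subfeas A b I l1 x (kappa ^+ k * D)
    ((1 - t) *: w + t *: sel k1).
  by apply: seg => i iI; rewrite mxE ?iI ?(negbTE iI).
have : Psi g x ((1 - t) *: w + t *: sel k1) <= Psi g x (sel k).
  by rewrite /Psi !dotvB lerB.
rewrite Psi_affine; case/andP: t01 => _ t1; nra.
Qed.

End SameIntegerPart.

Lemma Psi_ge_geometric_tail (M : R) :
  (forall y, inX A b I y -> {in I, forall i, `|y 0 i| <= M}) ->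
  (forall k, 0 < Psi g x (sel k)) ->
  exists k1, forall k, (k1 <= k)%N ->
    kappa ^+ (k - k1) * Psi g x (sel k1) <= Psi g x (sel k).
Proof.
move=> bounded Psi_gt0.
have [|k1 same] := @int_part_infinitely_often _ _ I sel M.
  by move=> k i iI; have [[selX _] _] := sel_subsol k; rewrite selX.2 // bounded.
by exists k1; apply: Psi_ge_geometric (graft_Psi_ge0 same Psi_gt0).
Qed.

Variables (f f1 : 'rV[R]_n -> R) (f2 : 'rV[R]_n).
Hypothesis f_split :
  forall y, f y = f1 (upart I y) + \sum_(i < n | i \in I) f2 0 i * y 0 i.
Hypothesis f_diff : differentiable f x.
Hypothesis df_grad : forall h, 'd f x h = dotv (g x) h.

Lemma model_error_small e : 0 < e -> exists N, forall k, (N <= k)%N ->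
  f (upart I (sel k - x) + x) - f x - dotv (g x) (upart I (sel k - x))
    <= e * (kappa ^+ k * D).
Proof.
move=> e0; have [d d0 small] := differentiable_rem_le f_diff e0.
have D0 := radius_ge0; have D1 : 0 < D + 1 by lra.
have [N] := exists_expr_lt kappa_ge0_lt1 (divr_gt0 d0 D1); rewrite ltr_pdivlMr // => kN.
exists N => k Nk; have hk := norm_upart_sel k.
have hd : `|upart I (sel k - x)| < d.
  case/andP: kappa_ge0_lt1 => k0 k1.
  have kk : kappa ^+ k <= kappa ^+ N by rewrite ler_wiXn2l // ltW.
  have := exprn_ge0 k k0; nra.
apply: le_trans (ler_norm _) _; have := small _ hd; rewrite df_grad => /le_trans.
by apply; rewrite ler_wpM2l // ltW.
Qed.

Lemma backtracking_stops (m eps rho M : R) :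
  0 <= eps -> 0 < rho < 1 -> f x <= m ->
  (forall y, inX A b I y -> {in I, forall i, `|y 0 i| <= M}) ->
  exists j, Psi g x (sel j) <= eps \/ rho * Psi g x (sel j) <= m - f (sel j).
Proof.
move=> eps0 /andP[rho0 rho1] fxm bounded; apply: contrapT => /forallNP rejected.
have rej j : eps < Psi g x (sel j) /\ m - f (sel j) < rho * Psi g x (sel j).
  by have /not_orP[Pj mj] := rejected j; split; rewrite ltNge; apply/negP.
have Psi_gt0 j : 0 < Psi g x (sel j) := le_lt_trans eps0 (rej j).1.
have [k1 geo] := Psi_ge_geometric_tail bounded Psi_gt0.
set P1 := Psi g x (sel k1); set e := (1 - rho) * P1 / (kappa ^+ k1 * (D + 1)).
have D1 : 0 < D + 1 by have := radius_ge0; lra.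
have [k0 _] := andP kappa01; have kk1 : 0 < kappa ^+ k1 by rewrite exprn_gt0.
have e0 : 0 < e by rewrite divr_gt0 ?mulr_gt0 ?subr_gt0 ?Psi_gt0.
have [N small] := model_error_small e0.
pose k := (N + k1)%N.
have ek : e * (kappa ^+ k * D) <= (1 - rho) * (kappa ^+ (k - k1) * P1).
  rewrite /k addnK exprD.
  have -> : e * (kappa ^+ N * kappa ^+ k1 * D)
      = (1 - rho) * (kappa ^+ N * P1) * (D / (D + 1)).
    by rewrite /e; field; rewrite !gt_eqF.
  have kN : 0 <= kappa ^+ N by rewrite exprn_ge0 // ltW.
  rewrite ler_piMr ?ler_pdivrMr ?mul1r ?lerDl //.
  by apply: mulr_ge0; [lra | exact: mulr_ge0 kN (ltW (Psi_gt0 k1))].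
have := model_error f_split (sel k) (grad_int_coord f_split f_diff df_grad).
have := small k (leq_addr _ _); have := (rej k).2.
have rho1' : 0 <= 1 - rho by lra.
have := ler_wpM2l rho1' (geo k (leq_addl _ _)); rewrite -/P1; lra.
Qed.

End Backtracking.

Theorem mainTheorem4 (R : realType) (n p : nat) (A : 'M[R]_(p, n)) (b : 'cV[R]_p)
  (I : {set 'I_n}) (l1 : bool)
  (f : 'rV[R]_n -> R) (g : 'rV[R]_n -> 'rV[R]_n)
  (x0 : 'rV[R]_n) (eps Delta0 rho kappa kappam rho1 rho2 Dmin Dmax : R)
  (* (A1): f is C^1 with gradient g, and g is locally Lipschitz *)
  (Hdiff : forall x : 'rV[R]_n,
     differentiable f x /\ forall h : 'rV[R]_n, 'd f x h = dotv (g x) h)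
  (Hcont : continuous g)
  (Hlip : forall x : 'rV[R]_n, exists r : R, 0 < r /\ exists L : R,
     forall y z : 'rV[R]_n, `|y - x| < r -> `|z - x| < r ->
       `|g y - g z| <= L * `|y - z|)
  (* (A2): f(u, z) = f1(u) + <f2, z> *)
  (HA2 : exists (f1 : 'rV[R]_n -> R) (f2 : 'rV[R]_n),
     forall x, f x = f1 (upart I x) + \sum_(i < n | i \in I) f2 0 i * x 0 i)
  (* (A3): the integer parts of feasible points form a bounded set *)
  (HA3 : exists M : R, forall x, inX A b I x -> forall i, i \in I -> `|x 0 i| <= M)
  (Hx0 : inX A b I x0) (Heps : 0 <= eps) (HD0 : 0 < Delta0)
  (Hrho : 0 < rho < 1) (Hkappa : 0 < kappa < 1) (Hkm : 0 < kappam <= 1)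
  (Hrho12 : rho <= rho1 /\ rho1 < rho2 /\ rho2 < 1)
  (HDminmax : 0 < Dmin /\ Dmin <= Dmax) :
  (* at any (non-terminated) iteration k with state (x^k, m_k, Delta_k) ... *)
  forall (x : 'rV[R]_n) (m D : R),
    smil_reachable A b I l1 f g x0 eps Delta0 rho kappa kappam rho1 rho2 Dmin Dmax x m D ->
  (* ... and for any choice of subproblem solutions during backtracking
     (sel j = trial point after j reductions of Delta_k) ... *)
  forall sel : nat -> 'rV[R]_n,
    (forall j : nat, is_subsol A b I l1 g x (kappa ^+ j * D) (sel j)) ->
  (* ... after finitely many reductions, S3 terminates or the trial is accepted *)
  exists j : nat,
    Psi g x (sel j) <= eps \/ rho * Psi g x (sel j) <= m - f (sel j).
Proof.
move=> x m D reach sel sel_subsol.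
have [rho0 _] := andP Hrho; have [_ km1] := andP Hkm.
have fxm := smil_reachable_f_le Heps rho0 km1 reach.
have [f1 [f2 f_split]] := HA2; have [M bounded] := HA3; have [fx dfx] := Hdiff x.
exact: (backtracking_stops (M := M) Hkappa sel_subsol f_split fx dfx Heps Hrho fxm bounded).
Qed.
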